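(* Suppose $f:\mathbb{R}^n\to\mathbb{R}$ is bounded below by $f_{\mathrm{low}}$, twice continuously differentiable with $L_H$-Lipschitz continuous Hessian, and the Hessians at all iterates satisfy $\|\nabla^2 f(\mathbf{x}_k)\|\leq M$ for some $M>0$ independent of $k$. Fix an iteration $k$ and $\epsilon>0$. Suppose $P_k$ is well-aligned (with parameters $\alpha\in(0,1)$, $P_{\max}>0$), $\sigma_k\geq\epsilon$, and $$\theta := (1-\alpha)^2 - \frac{4M(r-1)\alpha^2}{\epsilon(1-\alpha)^2} > 0.$$ Then $\hat\sigma_k \geq \min((1-\alpha)^2,\theta)\,\epsilon$.
   Context: Iterates $\mathbf{x}_k\in\mathbb{R}^n$ and matrices $P_k\in\mathbb{R}^{n\times p}$ are given. Criticality measures: $\tau_k:=\max(-\lambda_{\min}(\nabla^2 f(\mathbf{x}_k)),0)$, $\sigma_k:=\max(\|\nabla f(\mathbf{x}_k)\|,\tau_k)$; $\hat\tau_k:=\max(-\lambda_{\min}(P_k^T\nabla^2 f(\mathbf{x}_k)P_k),0)$, $\hat\sigma_k:=\max(\|P_k^T\nabla f(\mathbf{x}_k)\|,\hat\tau_k)$. Write the eigendecomposition $\nabla^2 f(\mathbf{x}_k)=\sum_{i=1}^r\lambda_i\mathbf{v}_i\mathbf{v}_i^T$ with $\lambda_1\geq\cdots\geq\lambda_r$, $r:=\operatorname{rank}(\nabla^2 f(\mathbf{x}_k))$, $\mathbf{v}_1,\ldots,\mathbf{v}_r$ orthonormal, and set $\hat{\mathbf{v}}_i:=P_k^T\mathbf{v}_i\in\mathbb{R}^p$.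 $P_k$ is called well-aligned if $\|P_k\|\leq P_{\max}$, $\|P_k^T\nabla f(\mathbf{x}_k)\|\geq(1-\alpha)\|\nabla f(\mathbf{x}_k)\|$, $\|\hat{\mathbf{v}}_r\|\geq 1-\alpha$, and $(\hat{\mathbf{v}}_i^T\hat{\mathbf{v}}_r)^2\leq 4\alpha^2$ for all $i=1,\ldots,r-1$, for some $\alpha\in(0,1)$ and $P_{\max}>0$ independent of $k$. *)

From HB Require Import structures.
From mathcomp Require Import all_boot all_order all_algebra.
From mathcomp Require Import boolp classical_sets reals.
Set Implicit Arguments. Unset Strict Implicit. Unset Printing Implicit Defensive.
Import Order.TTheory GRing.Theory Num.Theory.
Local Open Scope ring_scope.
Local Open Scope classical_set_scope.

Section Defs.
Variable R : realType.

Definition dotv (m : nat) (u v : 'cV[R]_m) : R := \sum_i u i 0 * v i 0.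
Definition enorm (m : nat) (u : 'cV[R]_m) : R := Num.sqrt (dotv u u).

Definition opnorm (m k : nat) (A : 'M[R]_(m, k)) : R :=
  sup [set enorm (A *m x) | x in [set x : 'cV[R]_k | enorm x <= 1]].

(* smallest (real) eigenvalue of a square matrix; meant for symmetric matrices *)
Definition is_lambda_min (m : nat) (A : 'M[R]_m) (l : R) : Prop :=
  eigenvalue A l /\ (forall a : R, eigenvalue A a -> l <= a).
Definition lambda_min (m : nat) (A : 'M[R]_m) : R :=
  xget 0 [set l | is_lambda_min A l].

Definition tau_of (m : nat) (H : 'M[R]_m) : R := Num.max (- lambda_min H) 0.
Definition sigma_of (m : nat) (g : 'cV[R]_m) (H : 'M[R]_m) : R :=
  Num.max (enorm g) (tau_of H).
Definition hat_sigma (n p : nat) (P : 'M[R]_(n, p)) (g : 'cV[R]_n) (H : 'M[R]_n) : R :=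
  sigma_of (P^T *m g) (P^T *m H *m P).

(* well-alignedness of P w.r.t. gradient g and eigenvector matrix V
   (columns v_1 .. v_r, r = s.+1; v_r = col ord_max V) *)
Definition well_aligned (n p s : nat) (alpha Pmax : R) (P : 'M[R]_(n, p))
    (g : 'cV[R]_n) (V : 'M[R]_(n, s.+1)) : Prop :=
  [/\ opnorm P <= Pmax,
      enorm (P^T *m g) >= (1 - alpha) * enorm g,
      enorm (P^T *m col ord_max V) >= 1 - alpha &
      forall i : 'I_s.+1, i != ord_max ->
        (dotv (P^T *m col i V) (P^T *m col ord_max V)) ^+ 2 <= 4 * alpha ^+ 2].

End Defs.

(* lambda_min of a symmetric matrix is the infimum of its Rayleigh quotients.  This needs no
   compactness: if the infimum mu were not an eigenvalue, A - mu would be positive semidefinite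
   and invertible, hence coercive by Cauchy-Schwarz, contradicting the choice of mu.
   If |g| >= eps, alignment transfers the gradient to P^T g.  Otherwise lambda_min H <= -eps forces
   lambda_r <= -eps, and testing P^T H P on w = P^T v_r gives
   lambda_min (P^T H P) |w|^2 <= 4 M (r-1) alpha^2 - eps |w|^4, since the cross terms
   (v_i^T P w)^2 are at most 4 alpha^2; with |w|^2 >= (1-alpha)^2 this bounds -lambda_min below. *)

From HB Require Import structures.
From mathcomp Require Import all_boot all_order all_algebra.
From mathcomp Require Import boolp classical_sets reals.
From mathcomp Require Import ring lra.
Import Order.TTheory GRing.Theory Num.Theory.
Set Implicit Arguments. Unset Strict Implicit. Unset Printing Implicit Defensive.
Local Open Scope ring_scope.
Local Open Scope classical_set_scope.

Section BilinearForms.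
Variable R : realType.

Definition bform m k (B : 'M[R]_(m, k)) (u : 'cV[R]_m) (v : 'cV[R]_k) : R :=
  (u^T *m B *m v) 0 0.

Definition mx_l1norm m k (B : 'M[R]_(m, k)) : R := \sum_i \sum_j `|B i j|.

Lemma dotv_bform m (u v : 'cV[R]_m) : dotv u v = bform 1%:M u v.
Proof. by rewrite /bform mulmx1 mxE; apply: eq_bigr => i _; rewrite mxE. Qed.

Lemma bformDl m k (B : 'M[R]_(m, k)) u1 u2 v :
  bform B (u1 + u2) v = bform B u1 v + bform B u2 v.
Proof. by rewrite /bform linearD /= !mulmxDl mxE. Qed.

Lemma bformDr m k (B : 'M[R]_(m, k)) u v1 v2 :
  bform B u (v1 + v2) = bform B u v1 + bform B u v2.
Proof. by rewrite /bform mulmxDr mxE. Qed.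

Lemma bformZl m k (B : 'M[R]_(m, k)) t u v : bform B (t *: u) v = t * bform B u v.
Proof. by rewrite /bform linearZ /= -!scalemxAl mxE. Qed.

Lemma bformZr m k (B : 'M[R]_(m, k)) t u v : bform B u (t *: v) = t * bform B u v.
Proof. by rewrite /bform -!scalemxAr mxE. Qed.

Lemma bform_mxB m (A C : 'M[R]_m) u v : bform (A - C) u v = bform A u v - bform C u v.
Proof. by rewrite /bform mulmxBr mulmxBl [LHS]mxE [X in _ + X]mxE. Qed.

Lemma bform_scalar m (a : R) (u v : 'cV[R]_m) : bform a%:M u v = a * dotv u v.
Proof. by rewrite /bform mul_mx_scalar -scalemxAl mxE dotv_bform /bform mulmx1. Qed.

Lemma bform_mulmxr m k l (A : 'M[R]_(m, k)) (B : 'M[R]_(k, l)) u v :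
  bform A u (B *m v) = bform (A *m B) u v.
Proof. by rewrite /bform !mulmxA. Qed.

Lemma bform_trmx_mulmx m k l (C : 'M[R]_(k, m)) (B : 'M[R]_(k, l)) u v :
  bform B (C *m u) v = bform (C^T *m B) u v.
Proof. by rewrite /bform trmx_mul !mulmxA. Qed.

Lemma bformC m (B : 'M[R]_m) u v : B^T = B -> bform B u v = bform B v u.
Proof.
move=> symB; rewrite /bform -[in LHS](trmxK (_ *m v)) [LHS]mxE.
by rewrite !trmx_mul trmxK symB mulmxA.
Qed.

Lemma dotvC m (u v : 'cV[R]_m) : dotv u v = dotv v u.
Proof. by rewrite !dotv_bform bformC // tr_scalar_mx. Qed.

Lemma dotv_mulmx m k (A : 'M[R]_(m, k)) u :
  dotv (A *m u) (A *m u) = bform (A^T *m A) u u.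
Proof. by rewrite dotv_bform bform_trmx_mulmx bform_mulmxr mulmx1. Qed.

Lemma dotvZ m t (u : 'cV[R]_m) : dotv (t *: u) (t *: u) = t ^+ 2 * dotv u u.
Proof. by rewrite !dotv_bform bformZl bformZr mulrA expr2. Qed.

Lemma dotv_sqr m (u : 'cV[R]_m) : dotv u u = \sum_i u i 0 ^+ 2.
Proof. by apply: eq_bigr => i _; rewrite expr2. Qed.

Lemma dotv_ge0 m (u : 'cV[R]_m) : 0 <= dotv u u.
Proof. by rewrite dotv_sqr; apply: sumr_ge0 => i _; rewrite sqr_ge0. Qed.

Lemma dotv_eq0 m (u : 'cV[R]_m) : (dotv u u == 0) = (u == 0).
Proof.
apply/eqP/eqP => [|->]; last by rewrite dotv_bform /bform mulmx0 mxE.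
rewrite dotv_sqr => /eqP; rewrite psumr_eq0 => [/allP u0|i _]; last exact: sqr_ge0.
apply/matrixP => i j; rewrite ord1 mxE.
by apply/eqP; rewrite -sqrf_eq0; apply: u0; rewrite mem_index_enum.
Qed.

Lemma dotv_gt0 m (u : 'cV[R]_m) : (0 < dotv u u) = (u != 0).
Proof. by rewrite lt_def dotv_eq0 dotv_ge0 andbT. Qed.

Lemma enorm_ge0 m (u : 'cV[R]_m) : 0 <= enorm u.
Proof. exact: sqrtr_ge0. Qed.

Lemma enorm_sqr m (u : 'cV[R]_m) : enorm u ^+ 2 = dotv u u.
Proof. by rewrite sqr_sqrtr // dotv_ge0. Qed.

Lemma enormZ m t (u : 'cV[R]_m) : enorm (t *: u) = `|t| * enorm u.
Proof. by rewrite /enorm dotvZ sqrtrM ?sqr_ge0 // sqrtr_sqr. Qed.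

Lemma normr_coord_le_enorm m (u : 'cV[R]_m) i : `|u i 0| <= enorm u.
Proof.
rewrite -sqrtr_sqr /enorm ler_wsqrtr // dotv_sqr (bigD1 i) //= lerDl.
by apply: sumr_ge0 => j _; rewrite sqr_ge0.
Qed.

Lemma mx_l1norm_ge0 m k (B : 'M[R]_(m, k)) : 0 <= mx_l1norm B.
Proof. by apply: sumr_ge0 => i _; apply: sumr_ge0. Qed.

Lemma normr_bform_le m k (B : 'M[R]_(m, k)) u v :
  `|bform B u v| <= mx_l1norm B * enorm u * enorm v.
Proof.
have -> : bform B u v = \sum_i \sum_j u i 0 * B i j * v j 0.
  rewrite /bform mxE exchange_big; apply: eq_bigr => j _.
  by rewrite mxE mulr_suml; apply: eq_bigr => i _; rewrite !mxE.
rewrite /mx_l1norm -mulrA mulr_suml; apply: le_trans (ler_norm_sum _ _ _) _.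
apply: ler_sum => i _; rewrite mulr_suml; apply: le_trans (ler_norm_sum _ _ _) _.
apply: ler_sum => j _; rewrite !normrM mulrAC mulrC.
apply: ler_wpM2l => //; apply: ler_pM => //; exact: normr_coord_le_enorm.
Qed.


Lemma normr_bform_diag_le m (B : 'M[R]_m) u : `|bform B u u| <= mx_l1norm B * dotv u u.
Proof. by rewrite -enorm_sqr expr2 mulrA normr_bform_le. Qed.

Lemma bform_conj m k (D : 'M[R]_k) (V : 'M[R]_(m, k)) u :
  bform (V *m D *m V^T) u u = bform D (V^T *m u) (V^T *m u).
Proof. by rewrite /bform trmx_mul trmxK !mulmxA. Qed.

Lemma bform_diag k (d : 'I_k -> R) (z : 'cV[R]_k) :
  bform (diag_mx (\row_i d i)) z z = \sum_i d i * z i 0 ^+ 2.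
Proof.
rewrite /bform mul_mx_diag mxE; apply: eq_bigr => j _.
by rewrite !mxE expr2 mulrCA mulrA.
Qed.

Lemma coord_trmx_mulmx m k (V : 'M[R]_(m, k)) u i : (V^T *m u) i 0 = dotv (col i V) u.
Proof. by rewrite mxE; apply: eq_bigr => j _; rewrite !mxE. Qed.

Lemma dotv_mulmx_trmx m k (A : 'M[R]_(m, k)) u v : dotv u (A *m v) = dotv (A^T *m u) v.
Proof. by rewrite !dotv_bform bform_mulmxr bform_trmx_mulmx trmxK mulmx1 mul1mx. Qed.

Lemma cV_neq0_dim_gt0 m (x : 'cV[R]_m) : x != 0 -> (0 < m)%N.
Proof. by case: m x => // x; rewrite flatmx0 eqxx. Qed.

Lemma enorm_mulmx_le_opnorm m k (A : 'M[R]_(m, k)) x :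
  enorm x <= 1 -> enorm (A *m x) <= opnorm A.
Proof.
move=> x_le1; apply: ub_le_sup; last by exists x.
exists (Num.sqrt (mx_l1norm (A^T *m A))) => _ [y /= y_le1 <-].
rewrite /enorm ler_wsqrtr // dotv_mulmx; apply: le_trans (ler_norm _) _.
apply: le_trans (normr_bform_diag_le _ _) _.
by rewrite -enorm_sqr ler_piMr ?mx_l1norm_ge0 // expr_le1 ?enorm_ge0.
Qed.

End BilinearForms.

Section RayleighQuotient.
Variables (R : realType) (m : nat).
Implicit Types (A B : 'M[R]_m) (x y z : 'cV[R]_m).

Lemma bform_CauchySchwarz B x y : B^T = B -> (forall z, 0 <= bform B z z) ->
  bform B x y ^+ 2 <= bform B x x * bform B y y.
Proof.
move=> symB psdB.
have quad t : 0 <= bform B x x * t ^+ 2 + 2 * bform B x y * t + bform B y y.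
  have := psdB (t *: x + y).
  rewrite bformDl !bformDr !bformZl !bformZr (bformC x y symB).
  by congr (_ <= _); ring.
move: quad (psdB x); set a := bform B x x; set b := bform B x y; set c := bform B y y.
move=> quad a_ge0; have [a_gt0|a_le0] := ltrP 0 a.
  have := quad (- b / a); rewrite -(ler_pM2l a_gt0) mulr0.
  have -> : a * (a * (- b / a) ^+ 2 + 2 * b * (- b / a) + c) = a * c - b ^+ 2.
    by field; rewrite gt_eqF.
  by rewrite subr_ge0.
have a0 : a = 0 by apply/eqP; rewrite eq_le a_le0 a_ge0.
rewrite a0 mul0r; have [->|b_neq0] := eqVneq b 0; first by rewrite expr0n.
have := quad (- (c + 1) / (2 * b)); rewrite a0 mul0r add0r.
have -> : 2 * b * (- (c + 1) / (2 * b)) = - (c + 1) by field.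
by move=> ?; lra.
Qed.

Lemma psd_unitmx_coercive B : B^T = B -> (forall z, 0 <= bform B z z) ->
  B \in unitmx -> exists2 K, 0 <= K & forall x, dotv x x <= K * bform B x x.
Proof.
move=> symB psdB B_unit; set C := invmx B.
set K1 := mx_l1norm (C^T *m C); set K2 := mx_l1norm B.
exists (K1 * K2); first by rewrite mulr_ge0 ?mx_l1norm_ge0.
move=> x; set y := B *m x.
have yy : dotv y y = bform B x y by rewrite dotv_mulmx symB bform_mulmxr.
have yBy : bform B y y <= K2 * dotv y y.
  exact: le_trans (ler_norm _) (normr_bform_diag_le _ _).
have y_le : dotv y y <= K2 * bform B x x.
  have CS := bform_CauchySchwarz x y symB psdB; rewrite -yy in CS.
  have YY : dotv y y * dotv y y <= K2 * bform B x x * dotv y y.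
    by rewrite -expr2 (mulrC K2) -mulrA (le_trans CS) // ler_wpM2l.
  have := dotv_ge0 y; rewrite le0r => /orP[/eqP ->|Y_gt0].
    by rewrite mulr_ge0 ?mx_l1norm_ge0.
  by rewrite -(ler_pM2r Y_gt0).
have x_le : dotv x x <= K1 * dotv y y.
  have xCy : C *m y = x by rewrite /y mulmxA mulVmx // mul1mx.
  rewrite -{1 2}xCy dotv_mulmx.
  exact: le_trans (ler_norm _) (normr_bform_diag_le _ _).
by apply: le_trans x_le _; rewrite -mulrA ler_wpM2l ?mx_l1norm_ge0.
Qed.

Definition rayleigh_quotients A := [set bform A x x / dotv x x | x in [set x | x != 0]].
Definition rayleigh_inf A := inf (rayleigh_quotients A).

Lemma has_inf_rayleigh_quotients A x0 : x0 != 0 -> has_inf (rayleigh_quotients A).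
Proof.
move=> x0_neq0; split; first by exists (bform A x0 x0 / dotv x0 x0), x0.
exists (- mx_l1norm A) => _ [x /= x_neq0 <-].
rewrite ler_pdivlMr ?dotv_gt0 // mulNr.
by move: (normr_bform_diag_le A x); rewrite ler_norml => /andP[].
Qed.

Lemma rayleigh_inf_le A x : rayleigh_inf A * dotv x x <= bform A x x.
Proof.
have [->|x_neq0] := eqVneq x 0.
  have /eqP -> : dotv (0 : 'cV[R]_m) 0 == 0 by rewrite dotv_eq0.
  by rewrite /bform trmx0 !mul0mx mxE mulr0.
rewrite -ler_pdivlMr ?dotv_gt0 //; apply: ge_inf.
  exact: (has_inf_rayleigh_quotients A x_neq0).2.
by exists x.
Qed.

Lemma eigenvalue_bform A a : eigenvalue A a -> exists2 x, x != 0 & bform A x x = a * dotv x x.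
Proof.
case/eigenvalueP => v vA v_neq0; exists v^T.
  by rewrite -[0]trmx0 (inj_eq trmx_inj).
by rewrite dotv_bform /bform !trmxK mulmx1 vA -scalemxAl mxE.
Qed.

Lemma rayleigh_inf_le_eigenvalue A a : eigenvalue A a -> rayleigh_inf A <= a.
Proof.
case/eigenvalue_bform => x x_neq0 xAx.
by rewrite -(ler_pM2r (_ : 0 < dotv x x)) ?dotv_gt0 // -xAx rayleigh_inf_le.
Qed.

Lemma eigenvalue_rayleigh_inf A : A^T = A -> (0 < m)%N -> eigenvalue A (rayleigh_inf A).
Proof.
move=> symA m_gt0; apply: contraT => not_eig.
set mu := rayleigh_inf A; set B := A - mu%:M.
have B_unit : B \in unitmx.
  by move: not_eig; rewrite /eigenvalue /eigenspace kermx_eq0 row_free_unit negbK.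
have symB : B^T = B by rewrite /B linearB /= symA tr_scalar_mx.
have psdB z : 0 <= bform B z z by rewrite bform_mxB bform_scalar subr_ge0 rayleigh_inf_le.
have [K K_ge0 coercB] := psd_unitmx_coercive symB psdB B_unit.
have e_neq0 : delta_mx (Ordinal m_gt0) 0 != 0 :> 'cV[R]_m.
  apply/negP => /eqP/matrixP/(_ (Ordinal m_gt0) 0).
  by rewrite !mxE !eqxx => /eqP; rewrite oner_eq0.
have delta_gt0 : 0 < (K + 1)^-1 by rewrite invr_gt0; lra.
have [_ [x /= x_neq0 <-]] := inf_adherent delta_gt0 (has_inf_rayleigh_quotients A e_neq0).
rewrite -/(rayleigh_inf A) -/mu ltr_pdivrMr ?dotv_gt0 // => xAx_lt.
have d_gt0 : 0 < dotv x x by rewrite dotv_gt0.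
have xBx_lt : bform B x x < (K + 1)^-1 * dotv x x.
  by rewrite bform_mxB bform_scalar; lra.
have K_delta : K * (K + 1)^-1 = 1 - (K + 1)^-1 by field; rewrite gt_eqF //; lra.
have := coercB x; have := ler_wpM2l K_ge0 (ltW xBx_lt).
rewrite mulrA K_delta; have := mulr_gt0 delta_gt0 d_gt0; lra.
Qed.

Lemma lambda_min_rayleigh A : A^T = A -> (0 < m)%N -> lambda_min A = rayleigh_inf A.
Proof.
move=> symA m_gt0; apply: xget_unique.
  by split; [exact: eigenvalue_rayleigh_inf | exact: rayleigh_inf_le_eigenvalue].
move=> l [l_eig l_min]; apply/eqP.
by rewrite eq_le l_min ?eigenvalue_rayleigh_inf ?rayleigh_inf_le_eigenvalue.
Qed.

End RayleighQuotient.

Section OrthonormalColumns.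
Variables (R : realType) (m k : nat) (V : 'M[R]_(m, k)).
Hypothesis orthoV : V^T *m V = 1%:M.

Lemma dotv_trmx_mulmx_le x : dotv (V^T *m x) (V^T *m x) <= dotv x x.
Proof.
set z := V^T *m x; set y := V *m z.
have xy : dotv x y = dotv z z by rewrite dotv_mulmx_trmx.
have yy : dotv y y = dotv z z by rewrite dotv_mulmx orthoV -dotv_bform.
have := dotv_ge0 (x + (-1) *: y).
rewrite !dotv_bform !bformDl !bformDr !bformZl !bformZr -!dotv_bform.
by rewrite (dotvC y x) xy yy; lra.
Qed.

Lemma enorm_col i : enorm (col i V) = 1.
Proof.
by rewrite /enorm -coord_trmx_mulmx colE mulmxA orthoV mul1mx mxE !eqxx sqrtr1.
Qed.

Lemma mulmx_spectral_col (d : 'I_k -> R) i :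
  V *m diag_mx (\row_j d j) *m V^T *m col i V = d i *: col i V.
Proof.
rewrite colE -!mulmxA (mulmxA V^T) orthoV mul1mx scalemxAr; congr (V *m _).
apply/matrixP => a b; rewrite mul_diag_mx !mxE (ord1 b) eqxx !andbT.
by have [->|_] := eqVneq a i; rewrite ?mulr1 ?mulr0.
Qed.

Lemma normr_spectral_le_opnorm (d : 'I_k -> R) i :
  `|d i| <= opnorm (V *m diag_mx (\row_j d j) *m V^T).
Proof.
rewrite -[`|d i|]mulr1 -(enorm_col i) -enormZ -mulmx_spectral_col.
by apply: enorm_mulmx_le_opnorm; rewrite enorm_col.
Qed.

End OrthonormalColumns.

Lemma sum_mul_sqr_le (R : realDomainType) s (a t : 'I_s -> R) (M c : R) :
  (forall i, `|a i| <= M) -> (forall i, t i ^+ 2 <= c) ->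
  \sum_i a i * t i ^+ 2 <= s%:R * (M * c).
Proof.
move=> a_le t_le; rewrite -[s in s%:R]card_ord mulr_natl -sumr_const.
apply: ler_sum => i _; apply: le_trans (ler_norm _) _.
by rewrite normrM [`|t i ^+ 2|]ger0_norm ?sqr_ge0 //; apply: ler_pM; rewrite ?sqr_ge0.
Qed.

Section SpectralCompression.
Variables (R : realType) (n p s : nat) (H : 'M[R]_n).
Variables (lam : 'I_s.+1 -> R) (V : 'M[R]_(n, s.+1)).
Hypothesis orthoV : V^T *m V = 1%:M.
Hypothesis H_spectral : H = V *m diag_mx (\row_i lam i) *m V^T.
Hypothesis lam_antitone : forall i j : 'I_s.+1, (i <= j)%N -> lam j <= lam i.

Lemma spectral_sym : H^T = H.
Proof. by rewrite H_spectral !trmx_mul trmxK tr_diag_mx mulmxA. Qed.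

Lemma last_eigenvalue_le_lambda_min : (0 < n)%N -> lambda_min H < 0 -> lam ord_max <= lambda_min H.
Proof.
move=> n_gt0 lmin_lt0.
have lmin_eig : eigenvalue H (lambda_min H).
  by rewrite lambda_min_rayleigh ?eigenvalue_rayleigh_inf ?spectral_sym.
have [x x_neq0 xHx] := eigenvalue_bform lmin_eig.
have d_gt0 : 0 < dotv x x by rewrite dotv_gt0.
set z := V^T *m x.
have last_le : lam ord_max * dotv z z <= bform H x x.
  rewrite H_spectral bform_conj bform_diag dotv_sqr mulr_sumr; apply: ler_sum => i _.
  by apply: ler_wpM2r; [exact: sqr_ge0 | apply: lam_antitone; exact: leq_ord].
have bessel : dotv z z <= dotv x x := dotv_trmx_mulmx_le orthoV x.
have [lam_ge0|lam_lt0] := lerP 0 (lam ord_max).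
  have : 0 <= bform H x x := le_trans (mulr_ge0 lam_ge0 (dotv_ge0 z)) last_le.
  by rewrite xHx pmulr_lge0 // leNgt lmin_lt0.
rewrite -(ler_pM2r d_gt0) -xHx; apply: le_trans last_le.
by apply: ler_wnM2l => //; exact: ltW.
Qed.

Lemma lambda_min_compression_le (P : 'M[R]_(n, p)) w : (0 < p)%N ->
  lambda_min (P^T *m H *m P) * dotv w w <= \sum_i lam i * dotv (P^T *m col i V) w ^+ 2.
Proof.
move=> p_gt0; have symPHP : (P^T *m H *m P)^T = P^T *m H *m P.
  by rewrite !trmx_mul trmxK spectral_sym mulmxA.
rewrite lambda_min_rayleigh //; apply: le_trans (rayleigh_inf_le _ w) _.
rewrite -bform_mulmxr -bform_trmx_mulmx H_spectral bform_conj bform_diag le_eqVlt; apply/orP; left.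
by apply/eqP/eq_bigr => i _; rewrite coord_trmx_mulmx dotv_mulmx_trmx.
Qed.

Lemma lambda_min_compression_curvature_le (P : 'M[R]_(n, p)) (M eps b : R) :
  (0 < p)%N -> opnorm H <= M -> lam ord_max <= - eps ->
  (forall i, i != ord_max -> dotv (P^T *m col i V) (P^T *m col ord_max V) ^+ 2 <= b) ->
  lambda_min (P^T *m H *m P) * dotv (P^T *m col ord_max V) (P^T *m col ord_max V)
    <= s%:R * (M * b) - eps * dotv (P^T *m col ord_max V) (P^T *m col ord_max V) ^+ 2.
Proof.
move=> p_gt0 HM lam_last cross_le; set w := P^T *m col ord_max V in cross_le *.
have cross_sum_le : \sum_(i < s) lam (widen_ord (leqnSn s) i) *
    dotv (P^T *m col (widen_ord (leqnSn s) i) V) w ^+ 2 <= s%:R * (M * b).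
  apply: sum_mul_sqr_le => i.
    by apply: le_trans HM; rewrite H_spectral normr_spectral_le_opnorm.
  by apply: cross_le; rewrite -val_eqE /= neq_ltn ltn_ord.
have := lambda_min_compression_le P w p_gt0; rewrite big_ord_recr /= -/w.
have := ler_wpM2r (sqr_ge0 (dotv w w)) lam_last; lra.
Qed.

End SpectralCompression.

Lemma sqr_scale_le (R : realDomainType) (a e x y : R) :
  0 <= a <= 1 -> 0 <= e <= x -> a * x <= y -> a ^+ 2 * e <= y.
Proof.
move=> /andP[a_ge0 a_le1] /andP[e_ge0 e_le] axy; apply: le_trans axy.
by rewrite expr2 -mulrA ler_wpM2l // (le_trans _ e_le) // ler_piMl.
Qed.


Lemma neg_curvature_bound (R : realFieldType) (l W c K eps : R) :
  0 < eps -> 0 < c <= W -> 0 <= K -> l * W <= K - eps * W ^+ 2 ->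
  (c - K / (eps * c)) * eps <= - l.
Proof.
move=> eps_gt0 /andP[c_gt0 c_le] K_ge0 lW_le.
have W_gt0 : 0 < W by lra.
set q := K / (eps * c); have Kq : K = q * (eps * c) by rewrite /q divfK // gt_eqF ?mulr_gt0.
have q_ge0 : 0 <= q by rewrite divr_ge0 // ltW ?mulr_gt0.
rewrite -(ler_pM2r W_gt0); apply: le_trans (_ : eps * W ^+ 2 - K <= _); last by lra.
have -> : eps * W ^+ 2 - K = (c - q) * eps * W + eps * ((W - c) * (W + q)).
  by rewrite Kq; ring.
by rewrite lerDl; apply: mulr_ge0; [exact: ltW | apply: mulr_ge0; lra].
Qed.

Theorem lemma3p8 (R : realType) (n p s : nat)
    (g : 'cV[R]_n) (H : 'M[R]_n) (P : 'M[R]_(n, p))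
    (lam : 'I_s.+1 -> R) (V : 'M[R]_(n, s.+1))
    (M alpha Pmax eps : R) :
  H^T = H ->
  \rank H = s.+1 ->
  V^T *m V = 1%:M ->
  H = V *m diag_mx (\row_i lam i) *m V^T ->
  (forall i j : 'I_s.+1, (i <= j)%N -> lam j <= lam i) ->
  0 < M -> opnorm H <= M ->
  0 < alpha < 1 -> 0 < Pmax ->
  well_aligned alpha Pmax P g V ->
  0 < eps ->
  sigma_of g H >= eps ->
  0 < (1 - alpha) ^+ 2 - 4 * M * s%:R * alpha ^+ 2 / (eps * (1 - alpha) ^+ 2) ->
  hat_sigma P g H >=
    Num.min ((1 - alpha) ^+ 2)
      ((1 - alpha) ^+ 2 - 4 * M * s%:R * alpha ^+ 2 / (eps * (1 - alpha) ^+ 2)) * eps.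
Proof.
move=> _ rankH orthoV H_spectral lam_antitone M_gt0 HM /andP[alpha_gt0 alpha_lt1] _
  [_ Pg_ge Pv_ge cross_le] eps_gt0 sigma_ge theta_gt0.
set c := (1 - alpha) ^+ 2 in theta_gt0 *.
have c_gt0 : 0 < c by rewrite exprn_gt0 // subr_gt0.
rewrite /hat_sigma /sigma_of /tau_of !le_max.
have [g_ge|tau_ge] : eps <= enorm g \/ eps <= - lambda_min H.
  by move: sigma_ge; rewrite /sigma_of /tau_of !le_max [eps <= 0]leNgt eps_gt0 orbF => /orP.
  apply/orP; left; apply: le_trans (_ : c * eps <= _).
    by rewrite ler_wpM2r ?ge_min ?lexx // ltW.
  apply: sqr_scale_le Pg_ge; last by rewrite g_ge ltW.
  by rewrite subr_ge0 lerBlDr lerDl (ltW alpha_lt1) (ltW alpha_gt0).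
apply/orP; right; apply/orP; left.
have n_gt0 : (0 < n)%N by apply: leq_trans (rank_leq_row H); rewrite rankH.
have lam_last : lam ord_max <= - eps.
  apply: (le_trans (last_eigenvalue_le_lambda_min orthoV H_spectral lam_antitone n_gt0 _)); lra.
set w := P^T *m col ord_max V in Pv_ge cross_le.
have W_ge : c <= dotv w w.
  by rewrite /c -enorm_sqr ler_pXn2r ?nnegrE ?subr_ge0 ?(ltW alpha_lt1) ?enorm_ge0.
have p_gt0 : (0 < p)%N by apply: (@cV_neq0_dim_gt0 R _ w); rewrite -dotv_gt0; lra.
apply: le_trans (_ : (c - 4 * M * s%:R * alpha ^+ 2 / (eps * c)) * eps <= _).
  by rewrite ler_wpM2r ?ge_min ?lexx ?orbT // ltW.
apply: (neg_curvature_bound (W := dotv w w)); rewrite ?c_gt0 ?W_ge //.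
  by repeat apply: mulr_ge0; rewrite ?ler0n ?sqr_ge0 ?ltW.
have := lambda_min_compression_curvature_le orthoV H_spectral p_gt0 HM lam_last cross_le; lra.
Qed.
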